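(* Let $G$ be a graph, $\mathcal{B}$ a set of balls of $G$, and $X\subset V(G)$ a set such that $|V(H)\cup X|\le p$ for every connected component $H$ of $G-X$, where $p$ is the vertex integrity of $G$. Let $\mathcal{H}$ be the set of connected components of $G-X$. Then the number of equivalence classes of the twin-block relation $\sim_{\mathcal{B}}$ on $\mathcal{H}$ is at most $2^{\mathcal{O}(p^3)}$.
   Context: For a graph $G$, $r\ge 0$ and $v\in V(G)$, the ball $B_r(v)$ is the set of vertices at distance at most $r$ from $v$. The vertex integrity of $G$ is the minimum $b$ such that there is $X\subset V(G)$ with $|V(H)\cup X|\le b$ for every connected component $H$ of $G-X$. Two components $H,H'\in\mathcal{H}$ are twin-blocks with respect to $\mathcal{B}$, written $H\sim_{\mathcal{B}}H'$, if there is an isomorphism $\alpha$ from $H$ to $H'$ such that (i) for each $u\in V(H)$ and $v\in X$, $uv\in E(G)$ iff $\alpha(u)v\in E(G)$, and (ii) for each $u\in V(H)$ and $r\in\mathbb{N}$, $B_r(u)\in\mathcal{B}$ iff $B_r(\alpha(u))\in\mathcal{B}$. This is an equivalence relation. *)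

From mathcomp Require Import all_boot.
From Stdlib Require Import ClassicalEpsilon.
Set Implicit Arguments. Unset Strict Implicit. Unset Printing Implicit Defensive.

Section Graph.
Variables (T : finType) (e : rel T).

Fixpoint ball (r : nat) (v : T) : {set T} :=
  match r with
  | 0 => [set v]
  | r'.+1 => ball r' v :|: [set y | [exists x in ball r' v, e x y]]
  end.

Definition rel_minus (X : {set T}) : rel T :=
  [rel a b | [&& e a b, a \notin X & b \notin X]].

Definition comp_of (X : {set T}) (x : T) : {set T} :=
  [set y | (y \notin X) && connect (rel_minus X) x y].

Definition comps (X : {set T}) : {set {set T}} :=
  [set comp_of X x | x in ~: X].

(* vertex integrity: min over X of max(|X|, max_H |V(H) u X|)
   (= |X| + largest component, with value |X| when G - X is empty) *)
Definition vi_cost (X : {set T}) : nat :=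
  maxn #|X| (\max_(H in comps X) #|H :|: X|).

Definition vertex_integrity : nat := \big[minn/#|T|]_(X : {set T}) vi_cost X.

Definition twin_blocks (B : {set {set T}}) (X : {set T}) (H H' : {set T}) : Prop :=
  exists alpha : T -> T,
    [/\ {in H &, injective alpha},
        alpha @: H = H',
        {in H &, forall u w, e u w = e (alpha u) (alpha w)},
        {in H & X, forall u v, e u v = e (alpha u) v} &
        {in H, forall u r, (ball r u \in B) = (ball r (alpha u) \in B)}].

Definition asb (P : Prop) : bool :=
  if excluded_middle_informative P then true else false.

Definition num_twin_classes (B : {set {set T}}) (X : {set T}) : nat :=
  #|[set [set H' in comps X | asb (twin_blocks B X H H')] | H in comps X]|.

End Graph.

(* Two components of G - X are twins as soon as they have the same size and,
   once their vertices are numbered, the same adjacency matrix, the same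
   adjacency to X and the same balls in B around corresponding vertices.  A
   simple path meets X in at most |X| <= p vertices and between two of them
   stays inside one component, so it has at most p^2 + 2p vertices; hence
   every ball is a ball of radius at most d = p^2 + 2p, and these data form a
   word of p^3 + O(p^2) bits.  Since it determines the twin class, there are at
   most 2^O(p^3) classes. *)

From mathcomp Require Import all_boot zify.
From Stdlib Require Import ClassicalEpsilon.

Set Implicit Arguments.
Unset Strict Implicit.
Unset Printing Implicit Defensive.

Lemma asbP (P : Prop) : reflect P (asb P).
Proof. by rewrite /asb; case: excluded_middle_informative => p; constructor. Qed.

Lemma leq_card_imset_coarser (aT rT1 rT2 : finType) (f : aT -> rT1) (g : aT -> rT2)
    (C : {pred aT}) :
  {in C &, forall x y, g x = g y -> f x = f y} -> #|f @: C| <= #|g @: C|.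
Proof.
move=> g_f; case: (pickP C) => [x0 Cx0 | C0]; last first.
  by rewrite (leq_trans (leq_imset_card _ _)) // eq_card0.
pose h s := f (odflt x0 [pick x in C | g x == s]).
apply: leq_trans (leq_imset_card h _); apply: subset_leq_card.
apply/subsetP => _ /imsetP[x Cx ->]; apply/imsetP; exists (g x); first exact: imset_f.
rewrite /h; case: pickP => [z /andP[Cz /eqP gz] | /(_ x)]; last by rewrite Cx eqxx.
by rewrite (g_f x z).
Qed.

Section Enum.
Variables (T : finType) (x0 : T) (H : {set T}).

Lemma index_enum_lt y : y \in H -> index y (enum H) < #|H|.
Proof. by rewrite cardE index_mem mem_enum. Qed.

Lemma nth_index_enum y : y \in H -> nth x0 (enum H) (index y (enum H)) = y.
Proof. by move=> yH; rewrite nth_index ?mem_enum. Qed.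

End Enum.

Section Transport.
Variables (T : finType) (x0 : T) (H H' : {set T}).
Hypothesis card_eq : #|H| = #|H'|.

Definition transport (y : T) : T := nth x0 (enum H') (index y (enum H)).

Lemma transport_inj : {in H &, injective transport}.
Proof.
move=> u w uH wH /eqP; rewrite nth_uniq ?enum_uniq -?cardE -?card_eq ?index_enum_lt //.
by move/eqP => eq_index; rewrite -(nth_index_enum x0 uH) eq_index nth_index_enum.
Qed.

Lemma transport_imset : transport @: H = H'.
Proof.
apply/eqP; rewrite eqEcard card_in_imset ?card_eq ?leqnn ?andbT;
  last exact: transport_inj.
apply/subsetP => _ /imsetP[y yH ->].
by rewrite -mem_enum mem_nth // -cardE -card_eq index_enum_lt.
Qed.

End Transport.

Section Balls.
Variables (T : finType) (e : rel T).

Lemma ballP r u y :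
  reflect (exists2 s, path e u s & (last u s == y) && (size s <= r)) (y \in ball e r u).
Proof.
apply: (iffP idP).
- elim: r y => [|r IH] y /=.
    by rewrite in_set1 => /eqP ->; exists [::]; rewrite /= ?eqxx.
  rewrite in_setU inE => /orP[/IH[s ps /andP[/eqP ls sz]] | ].
    by exists s => //; rewrite ls eqxx ltnW.
  case/existsP=> x /andP[/IH[s ps /andP[/eqP ls sz]] exy].
  exists (rcons s y); first by rewrite rcons_path ps ls exy.
  by rewrite last_rcons size_rcons eqxx.
- case=> s ps /andP[/eqP <-]; elim: r s ps => [|r IH] s.
    by case: s => // _ _; rewrite in_set1.
  case/lastP: s => [|s z] ps sz; first by rewrite in_setU (IH [::]).
  move: ps sz; rewrite rcons_path size_rcons last_rcons => /andP[ps ez] sz.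
  by rewrite in_setU inE; apply/orP; right; apply/existsP; exists (last u s); rewrite IH.
Qed.

Lemma ball_mono m n u : m <= n -> ball e m u \subset ball e n u.
Proof.
move=> le_mn; apply/subsetP => y /ballP[s ps /andP[/eqP ls sz]].
by apply/ballP; exists s => //; rewrite ls eqxx (leq_trans sz).
Qed.

(* Loops can be cut out of any walk, so balls stop growing at the length
   bound of simple paths. *)
Lemma ball_minn d r u :
  (forall v s, path e v s -> uniq (v :: s) -> size s <= d) ->
  ball e r u = ball e (minn r d) u.
Proof.
move=> simple_le; case: leqP => // /ltnW le_dr.
apply/eqP; rewrite eqEsubset (ball_mono u le_dr) andbT.
apply/subsetP => y /ballP[s ps /andP[/eqP <- _]].
case: (shortenP ps) => s' ps' us' _.
by apply/ballP; exists s' => //; rewrite eqxx (simple_le _ _ ps' us').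
Qed.

End Balls.

Section SimplePaths.
Variables (T : finType) (e : rel T) (X : {set T}) (k m : nat).
Hypothesis comp_le : forall H, H \in comps e X -> #|H| <= k.
Hypothesis X_le : #|X| <= m.

Lemma size_path_outside t :
  sorted e t -> uniq t -> all (fun y => y \notin X) t -> size t <= k.
Proof.
case: t => [|a t] // pt ut /[dup] /andP[aX _] tX.
have pt_minus : path (rel_minus e X) a t.
  apply: (sub_in_path (P := [predC X])) tX pt => x y; rewrite !inE => xX yX exy.
  by rewrite /rel_minus /= exy xX yX.
have Ha : comp_of e X a \in comps e X by apply: imset_f; rewrite inE.
rewrite -(card_uniqP ut) (leq_trans _ (comp_le Ha)) // subset_leq_card //.
apply/subsetP => y yt; rewrite inE (allP tX y yt) /=.
exact: path_connect pt_minus _ yt.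
Qed.

Lemma find_X_le t : sorted e t -> uniq t -> find [in X] t <= k.
Proof.
move=> st ut; have outside : all (fun y => y \notin X) (take (find [in X] t) t).
  by elim: t {st ut} => //= a t IH; case: ifP => //= ->.
have := size_path_outside (take_sorted _ st) (take_uniq _ ut) outside.
by rewrite size_takel // find_size.
Qed.

Lemma count_X_le t : uniq t -> count [in X] t <= m.
Proof.
move=> ut; rewrite -size_filter -(card_uniqP (filter_uniq _ ut)).
rewrite (leq_trans _ X_le) // subset_leq_card //.
by apply/subsetP => y; rewrite mem_filter => /andP[].
Qed.

(* Before its first vertex in X, and between two consecutive ones, a simple
   path stays inside a single component of G - X. *)
Lemma size_path_find_count t : sorted e t -> uniq t ->
  size t <= find [in X] t + count [in X] t * k.+1.
Proof.
elim: t => [|a t IH] //= st /andP[_ ut].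
have st' := path_sorted st; have := IH st' ut; have := find_X_le st' ut.
by case: (a \in X) => /=; lia.
Qed.

Lemma size_simple_path u s : path e u s -> uniq (u :: s) -> size s < k + m * k.+1.
Proof.
move=> ps us; have su : sorted e (u :: s) := ps.
have := size_path_find_count su us; have := find_X_le su us; have := count_X_le us.
rewrite /=; nia.
Qed.

End SimplePaths.

Section Signature.
Variables (T : finType) (e : rel T) (B : {set {set T}}) (X : {set T}).

Lemma twin_blocks_trans H1 H2 H3 :
  twin_blocks e B X H1 H2 -> twin_blocks e B X H2 H3 -> twin_blocks e B X H1 H3.
Proof.
case=> a [a_inj a_im a_e a_X a_B] [b [b_inj b_im b_e b_X b_B]]; exists (b \o a).
have aH u : u \in H1 -> a u \in H2 by move=> uH; rewrite -a_im imset_f.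
split=> [u w uH wH /= /b_inj eq_a | | u w uH wH | u v uH vX | u uH r] /=.
- by apply: a_inj => //; apply: eq_a; apply: aH.
- by rewrite imset_comp a_im.
- by rewrite a_e // b_e //; apply: aH.
- by rewrite a_X // b_X //; apply: aH.
- by rewrite a_B // b_B //; apply: aH.
Qed.

Variables (x0 : T) (p d : nat).

Definition sig_index : finType := ('I_p * 'I_p + 'I_p * 'I_p + 'I_p * 'I_d.+1)%type.

(* Positions [i < #|H|] refer to the [i]-th vertex of [enum H]; entries at
   larger positions only mention the default vertex [x0]. *)
Definition block_sig (H : {set T}) : 'I_p.+1 * {ffun sig_index -> bool} :=
  (inord #|H|, [ffun k : sig_index => match k with
     | inl (inl (i, j)) => e (nth x0 (enum H) i) (nth x0 (enum H) j)
     | inl (inr (i, j)) => e (nth x0 (enum H) i) (nth x0 (enum X) j)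
     | inr (i, r) => ball e r (nth x0 (enum H) i) \in B end]).

Lemma card_block_sig :
  #|{: 'I_p.+1 * {ffun sig_index -> bool}}| = p.+1 * 2 ^ (p * p + p * p + p * d.+1).
Proof.
by rewrite card_prod card_ord card_ffun card_bool !card_sum !card_prod !card_ord.
Qed.

Hypothesis X_le : #|X| <= p.
Hypothesis ball_minn_d : forall r u, ball e r u = ball e (minn r d) u.

Lemma block_sig_twin (H H' : {set T}) : #|H| <= p -> #|H'| <= p ->
  block_sig H = block_sig H' -> twin_blocks e B X H H'.
Proof.
move=> H_le H'_le eq_sig.
have card_eq : #|H| = #|H'|.
  by have := congr1 (fun s => val s.1) eq_sig; rewrite /= !inordK.
have entry (k : sig_index) : (block_sig H).2 k = (block_sig H').2 k by rewrite eq_sig.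
have idx u : u \in H -> index u (enum H) < p.
  by move=> uH; rewrite (leq_trans (index_enum_lt uH)).
exists (transport x0 H H'); split.
- exact: transport_inj.
- exact: transport_imset.
- move=> u w uH wH; have := entry (inl (inl (Ordinal (idx u uH), Ordinal (idx w wH)))).
  by rewrite !ffunE /= !nth_index_enum.
- move=> u v uH vX.
  have vidx : index v (enum X) < p by rewrite (leq_trans (index_enum_lt vX)).
  have := entry (inl (inr (Ordinal (idx u uH), Ordinal vidx))).
  by rewrite !ffunE /= !nth_index_enum.
- move=> u uH r; have rd : minn r d < d.+1 by rewrite ltnS geq_minr.
  have := entry (inr (Ordinal (idx u uH), Ordinal rd)).
  by rewrite !ffunE /= nth_index_enum // -!ball_minn_d.
Qed.

End Signature.

Theorem mainTheorem4 :
  exists c : nat,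
  forall (T : finType) (e : rel T),
    symmetric e -> irreflexive e ->
  forall (B : {set {set T}}),
    (forall S, S \in B -> exists (r : nat) (v : T), S = ball e r v) ->
  forall (X : {set T}),
    (forall H, H \in comps e X -> #|H :|: X| <= vertex_integrity e) ->
    num_twin_classes e B X <= 2 ^ (c * (vertex_integrity e) ^ 3).
Proof.
exists 7 => T e _ _ B _ X comp_le; set p := vertex_integrity e in comp_le *.
have [C0 | [H0 /[dup] H0C /imsetP[x0 x0X eq_H0]]] := set_0Vmem (comps e X).
  by rewrite /num_twin_classes C0 imset0 cards0.
have x0H0 : x0 \in H0 by rewrite eq_H0 inE -in_setC x0X connect0.
have X_le : #|X| <= p.
  by rewrite (leq_trans _ (comp_le _ H0C)) // subset_leq_card // subsetUr.
have H_le H : H \in comps e X -> #|H| <= p.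
  by move=> HC; rewrite (leq_trans _ (comp_le _ HC)) // subset_leq_card // subsetUl.
have p_gt0 : 0 < p.
  by apply: leq_trans (H_le _ H0C); apply/card_gt0P; exists x0.
pose d := p + p * p.+1.
have balls_d r u : ball e r u = ball e (minn r d) u.
  by apply: ball_minn => v s ps us; rewrite ltnW // (size_simple_path H_le X_le ps us).
pose class H := [set K in comps e X | asb (twin_blocks e B X H K)].
have class_sig : {in comps e X &, forall H H',
    block_sig e B X x0 p d H = block_sig e B X x0 p d H' -> class H = class H'}.
  move=> H H' HC H'C eq_sig; apply/setP => K; rewrite !inE; congr (_ && _).
  have [HH' H'H] := (block_sig_twin X_le balls_d (H_le _ HC) (H_le _ H'C) eq_sig,
                     block_sig_twin X_le balls_d (H_le _ H'C) (H_le _ HC) (esym eq_sig)).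
  by apply/asbP/asbP => [/(twin_blocks_trans H'H) | /(twin_blocks_trans HH')].
rewrite (leq_trans (leq_card_imset_coarser class_sig)) //.
rewrite (leq_trans (max_card _)) // card_block_sig.
rewrite (leq_trans (leq_mul (ltn_expl p (ltnSn 1)) (leqnn _))) // -expnD.
by rewrite leq_exp2l // /d; nia.
Qed.
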